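(* Let $\mathcal J$ be a generalized almost complex structure and $D$ a torsion-free generalized connection on a Courant algebroid $E$. For $u\in E$ let $A_u$ be the endomorphism $v\mapsto(D_v\mathcal J)u$ of $E$ and $A_u^{\mathrm{sym}}$ its $\langle\cdot,\cdot\rangle$-symmetric part. Define $$\tilde D_uv=D_uv-\tfrac14\{A_u^{\mathrm{sym}},\mathcal J\}v-\tfrac12\mathcal J(D_u\mathcal J)v,$$ where $\{X,Y\}=XY+YX$. Then $\tilde D$ is a generalized connection with $\tilde D\mathcal J=0$, and its torsion satisfies $T^{\tilde D}(u,v,w)=\frac14N_{\mathcal J}(u,v,w)$ for all $u,v,w$. In particular, if $\mathcal J$ is integrable, then $\tilde D$ is torsion-free (and preserves $\mathcal J$).
   Context: A Courant algebroid on $M$ is a real vector bundle $E\to M$ with nondegenerate symmetric bilinear form $\langle\cdot,\cdot\rangle$, an $\mathbb R$-bilinear bracket $[\cdot,\cdot]$ on $\Gamma(E)$ and bundle map $\pi:E\to TM$ such that for $u,v,w\in\Gamma(E)$, $f\in C^\infty(M)$: $[u,[v,w]]=[[u,v],w]+[v,[u,w]]$; $\pi([u,v])=[\pi(u),\pi(v)]$; $[u,fv]=\pi(u)(f)v+f[u,v]$; $\pi(u)\langle v,w\rangle=\langle[u,v],w\rangle+\langle v,[u,w]\rangle$; $2\langle[u,u],v\rangle=\pi(v)\langle u,u\rangle$. A generalized connection is an $\mathbb R$-linear $D:\Gamma(E)\to\Gamma(E^*\otimes E)$ with $D_u(fv)=\pi(u)(f)v+fD_uv$ and $\pi(u)\langle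 v,w\rangle=\langle D_uv,w\rangle+\langle v,D_uw\rangle$; its torsion is $T^D(u,v)=D_uv-D_vu-[u,v]+(Du)^*v$ ($(Du)^*$ adjoint of $w\mapsto D_wu$), $T^D(u,v,w)=\langle T^D(u,v),w\rangle$. A generalized almost complex structure is a $\langle\cdot,\cdot\rangle$-orthogonal $\mathcal J$ with $\mathcal J^2=-\mathrm{Id}$; $N_{\mathcal J}(u,v)=[\mathcal Ju,\mathcal Jv]-[u,v]-\mathcal J([\mathcal Ju,v]+[u,\mathcal Jv])$, $N_{\mathcal J}(u,v,w)=\langle N_{\mathcal J}(u,v),w\rangle$; $\mathcal J$ is integrable if $N_{\mathcal J}=0$. *)

(* Algebraic (Serre–Swan style) model of a Courant algebroid:
   A  = the algebra C^oo(M) (any commutative algebra over a real field R),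
   S  = the A-module Gamma(E) of sections. *)
From HB Require Import structures.
From mathcomp Require Import all_boot all_order all_algebra.
From Stdlib Require Import ClassicalEpsilon.
Set Implicit Arguments. Unset Strict Implicit. Unset Printing Implicit Defensive.
Import Order.TTheory GRing.Theory Num.Theory.
Local Open Scope ring_scope.

Section Courant.
Variables (R : realFieldType) (A : comAlgType R) (S : lmodType A).

(* R-linear derivations of A (= vector fields acting on functions) *)
Definition is_derivation (d : A -> A) : Prop :=
  [/\ (forall f g, d (f + g) = d f + d g),
      (forall (r : R) f, d (r *: f) = r *: d f) &
      (forall f g, d (f * g) = d f * g + f * d g)].

Record courant_algebroid := CourantAlgebroid {
  ca_ip : S -> S -> A;
  ca_br : S -> S -> S;
  ca_anchor : S -> A -> A;
  (* <.,.> symmetric, A-bilinear, nondegenerate (fibrewise nondegenerate on a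
     finite-rank bundle: every tensorial functional is represented) *)
  ca_ip_sym : forall u v, ca_ip u v = ca_ip v u;
  ca_ip_addl : forall u v w, ca_ip (u + v) w = ca_ip u w + ca_ip v w;
  ca_ip_scalel : forall (f : A) u v, ca_ip (f *: u) v = f * ca_ip u v;
  ca_ip_nondeg : forall phi : S -> A,
      (forall x y, phi (x + y) = phi x + phi y) ->
      (forall (f : A) x, phi (f *: x) = f * phi x) ->
      exists s, forall x, phi x = ca_ip s x;
  ca_ip_nondeg0 : forall s, (forall x, ca_ip s x = 0) -> s = 0;
  ca_anchor_deriv : forall u, is_derivation (ca_anchor u);
  ca_anchor_add : forall u v f, ca_anchor (u + v) f = ca_anchor u f + ca_anchor v f;
  ca_anchor_scale : forall (g : A) u f, ca_anchor (g *: u) f = g * ca_anchor u f;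
  ca_br_addl : forall u v w, ca_br (u + v) w = ca_br u w + ca_br v w;
  ca_br_addr : forall u v w, ca_br u (v + w) = ca_br u v + ca_br u w;
  ca_br_scalel : forall (r : R) u v, ca_br ((r%:A : A) *: u) v = (r%:A : A) *: ca_br u v;
  ca_br_scaler : forall (r : R) u v, ca_br u ((r%:A : A) *: v) = (r%:A : A) *: ca_br u v;
  ca_jacobi : forall u v w,
      ca_br u (ca_br v w) = ca_br (ca_br u v) w + ca_br v (ca_br u w);
  ca_anchor_br : forall u v f,
      ca_anchor (ca_br u v) f = ca_anchor u (ca_anchor v f) - ca_anchor v (ca_anchor u f);
  ca_leibniz : forall u v (f : A),
      ca_br u (f *: v) = ca_anchor u f *: v + f *: ca_br u v;
  ca_invariance : forall u v w,
      ca_anchor u (ca_ip v w) = ca_ip (ca_br u v) w + ca_ip v (ca_br u w);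
  ca_sym_part : forall u v,
      (2%:R : A) * ca_ip (ca_br u u) v = ca_anchor v (ca_ip u u)
}.

Variable E : courant_algebroid.
Local Notation ip := (ca_ip E).
Local Notation br := (ca_br E).
Local Notation pi := (ca_anchor E).

(* adjoint of an endomorphism w.r.t. <.,.>: <adjoint F w, x> = <w, F x>.
   (It exists and is unique for A-linear F, by nondegeneracy.) *)
Definition adjoint (F : S -> S) (w : S) : S :=
  epsilon (inhabits 0) (fun s => forall x, ip s x = ip w (F x)).

Definition gen_connection (D : S -> S -> S) : Prop :=
  [/\ (forall u1 u2 v, D (u1 + u2) v = D u1 v + D u2 v),
      (forall (f : A) u v, D (f *: u) v = f *: D u v),
      (forall u v1 v2, D u (v1 + v2) = D u v1 + D u v2),
      (forall u (f : A) v, D u (f *: v) = pi u f *: v + f *: D u v) &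
      (forall u v w, pi u (ip v w) = ip (D u v) w + ip v (D u w))].

Definition torsion (D : S -> S -> S) (u v : S) : S :=
  D u v - D v u - br u v + adjoint (fun w => D w u) v.

Definition torsion3 (D : S -> S -> S) (u v w : S) : A := ip (torsion D u v) w.

Definition torsion_free (D : S -> S -> S) : Prop := forall u v, torsion D u v = 0.

Definition gen_almost_complex (J : S -> S) : Prop :=
  [/\ (forall u v, J (u + v) = J u + J v),
      (forall (f : A) u, J (f *: u) = f *: J u),
      (forall u v, ip (J u) (J v) = ip u v) &
      (forall u, J (J u) = - u)].

Definition nijenhuis (J : S -> S) (u v : S) : S :=
  br (J u) (J v) - br u v - J (br (J u) v + br u (J v)).

Definition nijenhuis3 (J : S -> S) (u v w : S) : A := ip (nijenhuis J u v) w.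

Definition integrable (J : S -> S) : Prop := forall u v, nijenhuis J u v = 0.

Definition covJ (D : S -> S -> S) (J : S -> S) (u v : S) : S :=
  D u (J v) - J (D u v).

Definition endA (D : S -> S -> S) (J : S -> S) (u : S) : S -> S :=
  fun v => covJ D J v u.

Definition sym_part (F : S -> S) : S -> S :=
  fun v => ((2%:R)^-1 : R)%:A *: (F v + adjoint F v).

Definition tildeD (D : S -> S -> S) (J : S -> S) (u v : S) : S :=
  D u v
  - ((4%:R)^-1 : R)%:A *: (sym_part (endA D J u) (J v) + J (sym_part (endA D J u) v))
  - ((2%:R)^-1 : R)%:A *: J (covJ D J u v).

End Courant.

From HB Require Import structures.
From mathcomp Require Import all_boot all_order all_algebra.
From mathcomp Require Import ring.
From Stdlib Require Import ClassicalEpsilon.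
Set Implicit Arguments. Unset Strict Implicit. Unset Printing Implicit Defensive.
Import Order.TTheory GRing.Theory Num.Theory.
Local Open Scope ring_scope.

(* Every claim is tested against a third section through the nondegenerate
   pairing.  Write Q(a,b,c) = <(D_a J) b, c>.  Metricity of D and
   orthogonality of J make Q skew in (b,c) and anti-invariant under
   (b,c) |-> (Jb,Jc); torsion-freeness expresses the Courant bracket through
   D, as <[u,v],w> = <D_u v, w> - <D_v u, w> + <D_w u, v>.  After these
   substitutions, each statement about tildeD becomes an identity between
   linear combinations, with coefficients in A, of values of Q and of
   <D_. ., .>. *)

Section CourantPairing.
Variables (R : realFieldType) (A : comAlgType R) (S : lmodType A).
Variable E : @courant_algebroid R A S.

Local Notation ip := (ca_ip E).
Local Notation br := (ca_br E).
Local Notation pi := (ca_anchor E).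

Lemma alg_invn (m n k : nat) : (m * n)%N = k -> (0 < n)%N ->
  ((m%:R)^-1 : R)%:A = n%:R * (((k%:R)^-1 : R)%:A) :> A.
Proof.
move=> <- n_gt0; rewrite mulr_natl scalerMnl; congr (_ *: 1).
by rewrite -[RHS]mulr_natl natrM invfM mulrCA mulfV ?mulr1 // pnatr_eq0 -lt0n.
Qed.

(* [ring] treats [r%:A] as an atom, so the constants 1/2 and 1/4 of tildeD are
   expressed through the single atom [e] = 1/8. *)
Local Notation e := (((8%:R)^-1 : R)%:A : A).

Lemma alg_inv8K : 8%:R * e = 1.
Proof. by rewrite -(@alg_invn 1 8 8) // invr1 scale1r. Qed.

Lemma alg_inv4_inv2 : ((4%:R)^-1 : R)%:A * ((2%:R)^-1 : R)%:A = e.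
Proof.
rewrite (@alg_invn 4 2 8) // (@alg_invn 2 4 8) //.
by transitivity (8%:R * e * e); [ring | rewrite alg_inv8K mul1r].
Qed.

Lemma ca_ipDr x y z : ip x (y + z) = ip x y + ip x z.
Proof. by rewrite !(ca_ip_sym E x) ca_ip_addl. Qed.

Lemma ca_ipZr (f : A) x y : ip x (f *: y) = f * ip x y.
Proof. by rewrite !(ca_ip_sym E x) ca_ip_scalel. Qed.

Lemma ca_ipNl x y : ip (- x) y = - ip x y.
Proof. by rewrite -scaleN1r ca_ip_scalel mulN1r. Qed.

Lemma ca_ipNr x y : ip x (- y) = - ip x y.
Proof. by rewrite -scaleN1r ca_ipZr mulN1r. Qed.

Lemma ca_ipBl x y z : ip (x - y) z = ip x z - ip y z.
Proof. by rewrite ca_ip_addl ca_ipNl. Qed.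

Lemma ca_ip0l x : ip 0 x = 0.
Proof. by rewrite -(scale0r (0 : S)) ca_ip_scalel mul0r. Qed.

Lemma ca_ip_inj x y : (forall w, ip x w = ip y w) -> x = y.
Proof.
move=> eq_xy; apply: subr0_eq; apply: (@ca_ip_nondeg0 _ _ _ E) => w.
by rewrite ca_ipBl eq_xy subrr.
Qed.

Lemma adjointE (F : S -> S) :
  (forall x y, F (x + y) = F x + F y) -> (forall (f : A) x, F (f *: x) = f *: F x) ->
  forall v x, ip (adjoint E F v) x = ip v (F x).
Proof.
move=> FD FZ v; apply: (epsilon_spec (inhabits 0) (fun s => forall x, ip s x = ip v (F x))).
have [s Hs] := @ca_ip_nondeg _ _ _ E (fun x => ip v (F x))
  (fun x y => ltac:(by rewrite /= FD ca_ipDr)) (fun f x => ltac:(by rewrite /= FZ ca_ipZr)).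
by exists s => x; rewrite Hs.
Qed.

Lemma ca_anchor0 a : pi a 0 = 0.
Proof.
have [piD _ _] := ca_anchor_deriv E a.
by apply/(addrI (pi a 0)); rewrite -piD !addr0.
Qed.

Definition conn3 (D : S -> S -> S) (u v w : S) : A := ip (D u v) w.

Section Connection.
Variable D : S -> S -> S.
Hypothesis HD : gen_connection E D.

Lemma connNr a b : D a (- b) = - D a b.
Proof.
have [_ _ DD _ _] := HD; apply/eqP; rewrite -addr_eq0 -DD addNr.
by apply/eqP/(addrI (D a 0)); rewrite -DD !addr0.
Qed.

Lemma conn3D1 a1 a2 b c : conn3 D (a1 + a2) b c = conn3 D a1 b c + conn3 D a2 b c.
Proof. by case: HD => DD _ _ _ _; rewrite /conn3 DD ca_ip_addl. Qed.
Lemma conn3Z1 (f : A) a b c : conn3 D (f *: a) b c = f * conn3 D a b c.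
Proof. by case: HD => _ DZ _ _ _; rewrite /conn3 DZ ca_ip_scalel. Qed.
Lemma conn3D2 a b1 b2 c : conn3 D a (b1 + b2) c = conn3 D a b1 c + conn3 D a b2 c.
Proof. by case: HD => _ _ DD _ _; rewrite /conn3 DD ca_ip_addl. Qed.
Lemma conn3N2 a b c : conn3 D a (- b) c = - conn3 D a b c.
Proof. by rewrite /conn3 connNr ca_ipNl. Qed.
Lemma conn3Z2 (f : A) a b c : conn3 D a (f *: b) c = pi a f * ip b c + f * conn3 D a b c.
Proof. by case: HD => _ _ _ DZ _; rewrite /conn3 DZ ca_ip_addl !ca_ip_scalel. Qed.
Lemma conn3N3 a b c : conn3 D a b (- c) = - conn3 D a b c.
Proof. by rewrite /conn3 ca_ipNr. Qed.
Lemma conn3_metric a b c : pi a (ip b c) = conn3 D a b c + conn3 D a c b.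
Proof. by case: HD => _ _ _ _ ->; rewrite /conn3 (ca_ip_sym E b). Qed.

Lemma torsion3E u v w :
  torsion3 E D u v w = conn3 D u v w - conn3 D v u w - ip (br u v) w + conn3 D w u v.
Proof.
have [DD DZ _ _ _] := HD.
rewrite /torsion3 /torsion ca_ip_addl !ca_ipBl (@adjointE (fun x => D x u)) //.
by rewrite (ca_ip_sym E v).
Qed.

Lemma torsion_free_brE : torsion_free E D ->
  forall u v w, ip (br u v) w = conn3 D u v w - conn3 D v u w + conn3 D w u v.
Proof.
move=> D_tf u v w; have := torsion3E u v w.
rewrite /torsion3 D_tf ca_ip0l => tf0.
by rewrite -[LHS]addr0 [in LHS]tf0; ring.
Qed.

End Connection.

Section AlmostComplex.
Variable J : S -> S.
Hypothesis HJ : gen_almost_complex E J.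

Lemma gacD x y : J (x + y) = J x + J y.
Proof. by case: HJ. Qed.
Lemma gacZ (f : A) x : J (f *: x) = f *: J x.
Proof. by case: HJ. Qed.
Lemma gacK x : J (J x) = - x.
Proof. by case: HJ. Qed.
Lemma ca_ipJl x y : ip (J x) y = - ip x (J y).
Proof. by case: HJ => _ _ Jip _; rewrite -[in LHS]Jip gacK ca_ipNl. Qed.

Lemma nijenhuis3E u v w : nijenhuis3 E J u v w =
  ip (br (J u) (J v)) w - ip (br u v) w
  + ip (br (J u) v) (J w) + ip (br u (J v)) (J w).
Proof. by rewrite /nijenhuis3 /nijenhuis !ca_ipBl ca_ipJl ca_ip_addl opprK addrA. Qed.

End AlmostComplex.

Definition covJ3 (D : S -> S -> S) (J : S -> S) (u v w : S) : A :=
  ip (covJ D J u v) w.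

Section CovariantDerivativeOfJ.
Variables (J : S -> S) (D : S -> S -> S).
Hypotheses (HJ : gen_almost_complex E J) (HD : gen_connection E D).

Local Notation Q := (covJ3 D J).
Local Notation G := (conn3 D).

Lemma covJ3E a b c : Q a b c = G a (J b) c + G a b (J c).
Proof. by rewrite /covJ3 /covJ ca_ipBl (ca_ipJl HJ) opprK. Qed.

Lemma covJ3D1 a1 a2 b c : Q (a1 + a2) b c = Q a1 b c + Q a2 b c.
Proof. rewrite !covJ3E !(conn3D1 HD); ring. Qed.
Lemma covJ3Z1 (f : A) a b c : Q (f *: a) b c = f * Q a b c.
Proof. rewrite !covJ3E !(conn3Z1 HD); ring. Qed.
Lemma covJ3N1 a b c : Q (- a) b c = - Q a b c.
Proof. by rewrite -scaleN1r covJ3Z1 mulN1r. Qed.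
Lemma covJ3D2 a b1 b2 c : Q a (b1 + b2) c = Q a b1 c + Q a b2 c.
Proof. rewrite !covJ3E (gacD HJ) !(conn3D2 HD); ring. Qed.
Lemma covJ3Z2 (f : A) a b c : Q a (f *: b) c = f * Q a b c.
Proof. rewrite !covJ3E (gacZ HJ) !(conn3Z2 HD) (ca_ipJl HJ); ring. Qed.
Lemma covJ3D3 a b c1 c2 : Q a b (c1 + c2) = Q a b c1 + Q a b c2.
Proof. by rewrite /covJ3 ca_ipDr. Qed.
Lemma covJ3Z3 (f : A) a b c : Q a b (f *: c) = f * Q a b c.
Proof. by rewrite /covJ3 ca_ipZr. Qed.
Lemma covJ3N3 a b c : Q a b (- c) = - Q a b c.
Proof. by rewrite /covJ3 ca_ipNr. Qed.

Lemma covJ3_skew a b c : Q a b c = - Q a c b.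
Proof.
have : pi a (ip (J b) c + ip b (J c)) = 0 by rewrite (ca_ipJl HJ) addNr ca_anchor0.
case: (ca_anchor_deriv E a) => -> _ _; rewrite !(conn3_metric HD) !covJ3E => sum0.
by apply/eqP; rewrite -addr_eq0 -sum0; apply/eqP; ring.
Qed.

Lemma covJ3JJ a b c : Q a (J b) (J c) = - Q a b c.
Proof. rewrite !covJ3E !(gacK HJ) (conn3N2 HD) conn3N3; ring. Qed.

Lemma covJ3J a b c : Q a b (J c) = - Q a c (J b).
Proof.
have := covJ3JJ a b (J c); rewrite (gacK HJ) covJ3N3 => /oppr_inj <-.
exact: covJ3_skew.
Qed.

Lemma ip_endA_sym u x w :
  ip (endA D J u x + adjoint E (endA D J u) x) w = Q x u w + Q w u x.
Proof.
have [DD DZ _ _ _] := HD.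
rewrite ca_ip_addl adjointE ?(ca_ip_sym E x) // => [y z | f y]; rewrite /endA /covJ.
- by rewrite !DD (gacD HJ) opprD addrACA.
- by rewrite !DZ (gacZ HJ) scalerBr.
Qed.

Lemma tildeD3E u v w : ip (tildeD E D J u v) w =
  G u v w - e * (Q (J v) u w + Q w u (J v) - Q v u (J w) - Q (J w) u v)
  + 4%:R * e * Q u v (J w).
Proof.
rewrite /tildeD /sym_part (gacZ HJ) -scalerDr scalerA alg_inv4_inv2 (@alg_invn 2 4 8) //.
rewrite !ca_ipBl !ca_ip_scalel (ca_ip_addl E _ (J _)) !(ca_ipJl HJ) !ip_endA_sym.
rewrite /conn3 /covJ3; ring.
Qed.

Local Notation tD := (tildeD E D J).

Lemma tildeD_connection : gen_connection E tD.
Proof.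
split=> [u1 u2 v | f u v | u v1 v2 | u f v | u v w].
- apply: ca_ip_inj => w.
  by rewrite [RHS]ca_ip_addl !tildeD3E !covJ3D2 covJ3D1 (conn3D1 HD); ring.
- apply: ca_ip_inj => w.
  by rewrite [RHS]ca_ip_scalel !tildeD3E !covJ3Z2 covJ3Z1 (conn3Z1 HD); ring.
- apply: ca_ip_inj => w.
  by rewrite [RHS]ca_ip_addl !tildeD3E (gacD HJ) !covJ3D1 !covJ3D3 covJ3D2 (conn3D2 HD); ring.
- apply: ca_ip_inj => w.
  rewrite [RHS]ca_ip_addl !ca_ip_scalel !tildeD3E (gacZ HJ) !covJ3Z1 !covJ3Z3 covJ3Z2.
  by rewrite (conn3Z2 HD); ring.
- by rewrite (ca_ip_sym E v (tD u w)) !tildeD3E (conn3_metric HD) (covJ3J u w v); ring.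
Qed.

Lemma covJ_tildeD u v : covJ tD J u v = 0.
Proof.
apply: ca_ip_inj => w; rewrite ca_ip0l /covJ ca_ipBl (ca_ipJl HJ) opprK !tildeD3E.
rewrite covJ3JJ !(gacK HJ) !covJ3N1 !covJ3N3.
have -> : G u (J v) w = Q u v w - G u v (J w) by rewrite covJ3E addrK.
transitivity ((1 - 8%:R * e) * Q u v w); first ring.
by rewrite alg_inv8K subrr mul0r.
Qed.

Section TorsionFree.
Hypothesis HT : torsion_free E D.

Lemma nijenhuis3_covJ3 u v w : nijenhuis3 E J u v w =
  Q (J u) v w - Q (J v) u w + Q w u (J v) + Q u v (J w) - Q v u (J w) + Q (J w) u v.
Proof.
rewrite (nijenhuis3E HJ) !(torsion_free_brE HD HT) !covJ3E !(gacK HJ).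
by rewrite !conn3N3; ring.
Qed.

Lemma torsion3_tildeD u v w :
  torsion3 E tD u v w = ((4%:R)^-1 : R)%:A * nijenhuis3 E J u v w.
Proof.
rewrite (torsion3E tildeD_connection) /conn3 !tildeD3E -/(G _ _ _) (torsion_free_brE HD HT).
rewrite nijenhuis3_covJ3 (@alg_invn 4 2 8) //.
rewrite (covJ3J w v u) (covJ3J v w u) (covJ3J u w v).
by rewrite (covJ3_skew (J w) v u) (covJ3_skew (J u) w v) (covJ3_skew (J v) w u); ring.
Qed.

Lemma tildeD_torsion_free : integrable E J -> torsion_free E tD.
Proof.
move=> J_int u v; apply: ca_ip_inj => w; have := torsion3_tildeD u v w.
by rewrite /torsion3 /nijenhuis3 (J_int u v) !ca_ip0l mulr0.
Qed.

End TorsionFree.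

End CovariantDerivativeOfJ.

End CourantPairing.

Theorem proposition3p6 (R : realFieldType) (A : comAlgType R) (S : lmodType A)
  (E : @courant_algebroid R A S) (J : S -> S) (D : S -> S -> S) :
  gen_almost_complex E J -> gen_connection E D -> torsion_free E D ->
  [/\ gen_connection E (tildeD E D J),
      (forall u v, covJ (tildeD E D J) J u v = 0),
      (forall u v w, torsion3 E (tildeD E D J) u v w
                     = ((4%:R)^-1 : R)%:A * nijenhuis3 E J u v w) &
      (integrable E J -> torsion_free E (tildeD E D J))].
Proof.
move=> HJ HD HT; split.
- exact: tildeD_connection.
- exact: covJ_tildeD.
- exact: torsion3_tildeD.
- exact: tildeD_torsion_free.
Qed.
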